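(* Let $W\in\mathbb{Z}^{m\times n}$, let $g:\mathbb{R}^m\to\mathbb{R}$ be convex and differentiable, and $f(x)=g(Wx)$. Assume we have a subroutine $\mathcal{A}$ that, for any face $F \subseteq [0,1]^n$, computes a minimizer $\hat{x}\in\arg\min\{g(Wx): x\in F\}$. Then, with access to the values of $f$, one can find a minimizer $x^\star$ of $f$ over $[0,1]^n$ with at most $m$ fractional entries (entries not in $\{0,1\}$) using at most $2n$ calls to $\mathcal{A}$.
   Context: Faces of the cube $[0,1]^n$ are the sets obtained by fixing some coordinates to $0$ or $1$. *)

From HB Require Import structures.
From mathcomp Require Import all_boot all_order all_algebra.
From mathcomp Require Import all_classical all_reals all_analysis.
Set Implicit Arguments. Unset Strict Implicit. Unset Printing Implicit Defensive.
Import Order.TTheory GRing.Theory Num.Theory.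
Import numFieldNormedType.Exports.
Local Open Scope classical_set_scope.
Local Open Scope ring_scope.

(* A face of the cube [0,1]^n: each coordinate is either fixed to 0/1
   (Some false / Some true) or free (None). *)
Definition face (n : nat) := {ffun 'I_n -> option bool}.

(* Points of R^n are column vectors 'cV[R]_n; x i 0 is the i-th coordinate. *)
Definition in_face (R : realType) (n : nat) (F : face n) (x : 'cV[R]_n) : Prop :=
  forall i : 'I_n, match F i with
                   | Some b => x i 0 = (b%:R : R)
                   | None => 0 <= x i 0 <= 1
                   end.

Definition cube_face (n : nat) : face n := [ffun => None].

(* An oracle algorithm: it may query the subroutine A on a face (receiving a
   point of R^n), query the value of f at any point (receiving a real), or
   stop and output a point. *)
Inductive prog (R : realType) (n : nat) : Type :=
| Ret : 'cV[R]_n -> prog R n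
| CallA : face n -> ('cV[R]_n -> prog R n) -> prog R n
| EvalF : 'cV[R]_n -> (R -> prog R n) -> prog R n.

Fixpoint run (R : realType) (n : nat) (P : prog R n)
    (A : face n -> 'cV[R]_n) (f : 'cV[R]_n -> R) : 'cV[R]_n * nat :=
  match P with
  | Ret x => (x, 0%N)
  | CallA F k => let r := run (k (A F)) A f in (r.1, r.2.+1)
  | EvalF x k => run (k (f x)) A f
  end.

Definition compose_lin (R : realType) (m n : nat) (W : 'M[int]_(m, n))
    (g : 'cV[R]_m -> R) (x : 'cV[R]_n) : R :=
  g (map_mx (fun z : int => z%:~R) W *m x).

Definition face_minimizer_oracle (R : realType) (n : nat)
    (f : 'cV[R]_n -> R) (A : face n -> 'cV[R]_n) : Prop :=
  forall F : face n, in_face F (A F) /\ (forall y, in_face F y -> f (A F) <= f y).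

Definition num_fractional (R : realType) (n : nat) (x : 'cV[R]_n) : nat :=
  #|[set i : 'I_n | (x i 0 != 0) && (x i 0 != 1)]|.

From HB Require Import structures.
From mathcomp Require Import all_boot all_order all_algebra.
From mathcomp Require Import all_classical all_reals all_analysis.
From mathcomp Require Import lra zify.
Import Order.TTheory GRing.Theory Num.Theory.
Import numFieldNormedType.Exports.
Local Open Scope classical_set_scope.
Local Open Scope ring_scope.
Set Implicit Arguments. Unset Strict Implicit. Unset Printing Implicit Defensive.

(* Start from a minimizer x of f over the cube (one oracle call) and let v = f x.
   Scan the coordinates, maintaining a face F containing an optimum x.  For the
   coordinate i, ask the oracle for a minimizer over F with x_i := 0, then with
   x_i := 1; if one of them reaches v, fix the coordinate, otherwise every
   optimum in F has a fractional i-th entry and i stays free.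
   If an optimum x in F had more than m fractional entries, some nonzero d with
   W d = 0 would be supported on them; f is constant along x - s d, and moving
   until a fractional coordinate reaches 0 or 1 stays in F, so some free scanned
   coordinate is integral at an optimum of F, contradicting the invariant.
   Choosing the sign of d so that the current coordinate moves towards 0 also
   shows that at the last coordinate, if more than m entries are still
   fractional, the first call succeeds; hence at most 1 + (2n - 1) calls. *)

Lemma ker_vector_supported (K : fieldType) (m n : nat) (M : 'M[K]_(m, n))
    (T : {set 'I_n}) :
  (m < #|T|)%N ->
  exists d : 'cV[K]_n, [/\ d != 0, M *m d = 0 & forall j, j \notin T -> d j 0 = 0].
Proof.
move=> T_large.
pose E : 'M[K]_(#|~: T|, n) := rowsub enum_val 1%:M.
have rank_lt : (\rank (col_mx M E)^T < n)%N.
  rewrite mxrank_tr (leq_ltn_trans (rank_leq_row _)) //.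
  by rewrite -[n in (_ < n)%N]card_ord -(cardsC T) ltn_add2r.
have /rowV0Pn[u /sub_kermxP uC u_neq0] : kermx (col_mx M E)^T != 0.
  by rewrite -mxrank_eq0 mxrank_ker subn_eq0 -ltnNge.
have : col_mx M E *m u^T = 0 by rewrite -[col_mx M E]trmxK -trmx_mul uC trmx0.
rewrite mul_col_mx => /eqP; rewrite col_mx_eq0 => /andP[/eqP Mu /eqP Eu].
exists u^T; split => //; first by rewrite trmx_eq0.
move=> j jT; have jCT : j \in ~: T by rewrite inE.
have := congr1 (fun B : 'M[K]_(#|~: T|, 1) => B (enum_rank_in jCT j) 0) Eu.
by rewrite mul_rowsub_mx mul1mx !mxE enum_rankK_in.
Qed.

Lemma ratio_test (R : realFieldType) (n : nat) (x d : 'cV[R]_n) :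
  (forall j, 0 <= x j 0 <= 1) -> d != 0 ->
  exists2 s : R, (forall j, 0 <= (x - s *: d) j 0 <= 1)
    & exists2 j, d j 0 != 0 & (x - s *: d) j 0 = (if d j 0 < 0 then 1 else 0).
Proof.
move=> x01 d_neq0.
have [j0 dj0] : exists j0, d j0 0 != 0.
  apply/existsP; apply: contraR d_neq0 => /existsPn d0.
  by apply/eqP/matrixP => j k; rewrite (ord1 k) mxE; apply/eqP/negPn.
(* s j is the step at which coordinate j reaches 0 (if d j > 0) or 1 (if d j < 0). *)
pose s j := (x j 0 - (if d j 0 < 0 then 1 else 0)) / d j 0.
have [j1 dj1 s_min] := @arg_minP _ R _ j0 (fun j => d j 0 != 0) s dj0.
have sd j : d j 0 != 0 -> s j * d j 0 = x j 0 - (if d j 0 < 0 then 1 else 0).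
  by move=> dj; rewrite divfK.
have s_ge0 j : d j 0 != 0 -> 0 <= s j.
  move=> dj; have /andP[x0 x1] := x01 j; rewrite /s.
  case: (ltgtP (d j 0) 0) dj => [dn|dp|->]; rewrite ?eqxx // => _.
    by apply: mulr_le0; [lra | rewrite invr_le0 ltW].
  by rewrite subr0 divr_ge0 // ltW.
exists (s j1); last by exists j1; rewrite // !mxE sd // opprB addrCA subrr addr0.
move=> j; rewrite !mxE; case: (eqVneq (d j 0) 0) => [->|dj]; first by rewrite mulr0 subr0.
have /andP[x0 x1] := x01 j; have := sd j dj; have := s_min j dj.
have := s_ge0 _ dj1.
case: (ltgtP (d j 0) 0) dj => [dn|dp|->]; rewrite ?eqxx // => _ s1_ge0 s1_le e.
- have : s j * d j 0 <= s j1 * d j 0 by rewrite ler_nM2r.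
  have : s j1 * d j 0 <= 0 by rewrite mulr_ge0_le0 // ltW.
  lra.
- have : s j1 * d j 0 <= s j * d j 0 by rewrite ler_pM2r.
  have : 0 <= s j1 * d j 0 by rewrite mulr_ge0 // ltW.
  lra.
Qed.

Definition fractional (R : nzRingType) (r : R) : bool := (r != 0) && (r != 1).

Section Faces.
Variables (R : realType) (n : nat).
Implicit Types (F : face n) (x y : 'cV[R]_n).

Definition fix_coord F (i : 'I_n) (b : bool) : face n :=
  [ffun j => if j == i then Some b else F j].

Lemma num_fractionalE x : num_fractional x = #|[set j | fractional (x j 0)]%SET|.
Proof. by apply: eq_card => j; rewrite !inE; apply/idP/idP => [/set_mem|/mem_set]. Qed.

Lemma in_face_unit_interval F x : in_face F x -> forall j, 0 <= x j 0 <= 1.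
Proof. by move=> xF j; move: (xF j); case: (F j) => [[]|] // ->; rewrite ?ler01 ?lexx. Qed.

Lemma in_face_cube F x : in_face F x -> in_face (cube_face n) x.
Proof. by move=> xF j; rewrite ffunE; apply: in_face_unit_interval xF j. Qed.

Lemma free_of_fractional F x j : in_face F x -> fractional (x j 0) -> F j = None.
Proof.
by move=> xF; move: (xF j); case: (F j) => [[]|] // ->; rewrite /fractional eqxx ?andbF.
Qed.

Lemma in_face_fix F i b y :
  F i = None -> in_face (fix_coord F i b) y <-> in_face F y /\ y i 0 = b%:R.
Proof.
move=> Fi; split => [yF|[yF yi] j]; last first.
  by rewrite ffunE; case: eqP => [->|_]; [exact: yi | exact: yF].
split; last by move: (yF i); rewrite ffunE eqxx.
move=> j; move: (yF j); rewrite ffunE; case: eqP => [->|//].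
by rewrite Fi => ->; case: (b); rewrite ?ler01 ?lexx.
Qed.

Lemma in_face_update F x y :
  in_face F x -> (forall j, 0 <= y j 0 <= 1) ->
  (forall j, F j != None -> y j 0 = x j 0) -> in_face F y.
Proof.
move=> xF y01 y_fixed j; case: (eqVneq (F j) None) => [->|Fj]; first exact: y01.
by rewrite y_fixed //; exact: xF.
Qed.

End Faces.

Section Program.
Variables (R : realType) (m n : nat).

Definition try_fix (F : face n) (i : 'I_n) (b : bool) (v : R)
    (succeed : 'cV[R]_n -> prog R n) (fail : prog R n) : prog R n :=
  CallA (fix_coord F i b) (fun y =>
    EvalF y (fun w => if w == v then succeed y else fail)).

Fixpoint round_loop (k : seq 'I_n) (F : face n) (x : 'cV[R]_n) (v : R) : prog R n :=
  match k with
  | [::] => Ret x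
  | i :: k' =>
    if (num_fractional x <= m)%N then Ret x
    else try_fix F i false v (fun y => round_loop k' (fix_coord F i false) y v)
           (try_fix F i true v (fun y => round_loop k' (fix_coord F i true) y v)
              (round_loop k' F x v))
  end.

Definition round_program : prog R n :=
  if n == 0%N then Ret 0
  else CallA (cube_face n) (fun x => EvalF x (fun v =>
         round_loop (enum 'I_n) (cube_face n) x v)).

End Program.

Section Analysis.
Variables (R : realType) (m n : nat) (W : 'M[int]_(m, n)) (g : 'cV[R]_m -> R).
Local Notation f := (compose_lin W g).
Local Notation WR := (map_mx (fun z : int => z%:~R) W : 'M[R]_(m, n)).

Lemma compose_lin_ker (x d : 'cV[R]_n) (s : R) :
  WR *m d = 0 -> f (x - s *: d) = f x.
Proof. by move=> Wd; rewrite /compose_lin mulmxBr -scalemxAr Wd scaler0 subr0. Qed.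

Lemma round_one_coord (F : face n) (x : 'cV[R]_n) (i : 'I_n) :
  in_face F x -> (m < num_fractional x)%N ->
  exists y j, [/\ in_face F y, f y = f x, F j = None, ~~ fractional (y j 0)
                & j = i -> y j 0 = 0].
Proof.
rewrite num_fractionalE => xF m_lt.
have [d0 [d0_neq0 Wd0 d0_supp]] := ker_vector_supported WR m_lt.
wlog d0i : d0 d0_neq0 Wd0 d0_supp / 0 <= d0 i 0.
  move=> hw; case: (leP 0 (d0 i 0)) => [|d0i]; first exact: hw.
  apply: (hw (- d0)); rewrite ?oppr_eq0 ?mulmxN ?Wd0 ?oppr0 //.
    by move=> j /d0_supp; rewrite mxE => ->; rewrite oppr0.
  by rewrite mxE oppr_ge0 ltW.
have [s y01 [j dj yj]] := ratio_test (in_face_unit_interval xF) d0_neq0.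
have free_supp k : d0 k 0 != 0 -> F k = None.
  move=> dk; apply: free_of_fractional xF _.
  by apply: contraR dk => xk; rewrite d0_supp ?inE.
exists (x - s *: d0), j; split.
- apply: in_face_update xF y01 _ => k; apply: contraNeq => ykx; apply/eqP/free_supp.
  by apply: contra ykx => /eqP dk; rewrite !mxE dk mulr0 subr0.
- exact: compose_lin_ker.
- exact: free_supp.
- by rewrite yj; case: ifP; rewrite /fractional eqxx ?andbF.
- by move=> ji; rewrite yj ji ltNge d0i.
Qed.

Section Correctness.
Variables (A : face n -> 'cV[R]_n) (v : R).
Hypothesis A_min : face_minimizer_oracle f A.
Hypothesis v_min : forall y, in_face (cube_face n) y -> v <= f y.
Implicit Types (F : face n) (x y : 'cV[R]_n) (i j : 'I_n) (k : seq 'I_n).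

Lemma oracle_attains F y : in_face F y -> f y = v -> f (A F) = v.
Proof.
move=> yF fy; have [AF A_le] := A_min F.
by apply/le_anti; rewrite -{1}fy A_le // v_min //; exact: in_face_cube AF.
Qed.

Definition settled F j : Prop :=
  forall y, in_face F y -> f y = v -> fractional (y j 0).

Definition loop_inv k F : Prop :=
  [/\ uniq k, {in k, forall j, F j = None}
    & forall j, j \notin k -> F j = None -> settled F j].

Lemma loop_inv_fix i k F b : loop_inv (i :: k) F -> loop_inv k (fix_coord F i b).
Proof.
case=> /andP[ik k_uniq] k_free k_settled.
have Fi : F i = None by apply: k_free; rewrite mem_head.
split=> // [j jk|j jk]; rewrite ffunE; case: eqP => [ji|/eqP ji].
- by move: ik; rewrite -ji jk.
- by apply: k_free; rewrite inE jk orbT.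
- by [].
- move=> Fj y /(in_face_fix _ _ Fi)[yF _].
  by apply: k_settled; rewrite // inE negb_or ji.
Qed.

Lemma loop_inv_keep i k F : loop_inv (i :: k) F -> settled F i -> loop_inv k F.
Proof.
case=> /andP[_ k_uniq] k_free k_settled Fi; split=> // [j jk|j jk Fj].
  by apply: k_free; rewrite inE jk orbT.
by case: (eqVneq j i) => [->|ji] //; apply: k_settled; rewrite // inE negb_or ji.
Qed.

Lemma settled_of_no_fix F i :
  F i = None -> f (A (fix_coord F i false)) != v -> f (A (fix_coord F i true)) != v ->
  settled F i.
Proof.
move=> Fi fail0 fail1 y yF fy; apply/andP; split; [move: fail0 | move: fail1];
  by apply: contra => /eqP yi; apply/eqP/(oracle_attains (y := y)) => //; apply/in_face_fix.
Qed.

Lemma few_fractional_of_settled F x :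
  in_face F x -> f x = v -> (forall j, F j = None -> settled F j) ->
  (num_fractional x <= m)%N.
Proof.
move=> xF fx all_settled; rewrite leqNgt; apply/negP => m_lt.
have /card_gt0P[i _] : (0 < num_fractional x)%N by apply: leq_ltn_trans m_lt.
have [y [j [yF fy Fj yj _]]] := round_one_coord i xF m_lt.
by move: yj; rewrite (all_settled j Fj y yF) // fy.
Qed.

Lemma fix_zero_attains F x i :
  in_face F x -> f x = v -> F i = None ->
  (forall j, j != i -> F j = None -> settled F j) -> (m < num_fractional x)%N ->
  f (A (fix_coord F i false)) = v.
Proof.
move=> xF fx Fi others_settled m_lt.
have [y [j [yF fy Fj yj yi]]] := round_one_coord i xF m_lt.
case: (eqVneq j i) => [ji|ji].
  apply: (oracle_attains (y := y)); rewrite ?fy //.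
  by apply/in_face_fix => //; rewrite -ji yi.
by move: yj; rewrite (others_settled j ji Fj y yF) // fy.
Qed.

Lemma round_loop_spec k F x :
  loop_inv k F -> in_face F x -> f x = v ->
  let r := run (round_loop m k F x v) A f in
  [/\ in_face F r.1, f r.1 = v, (num_fractional r.1 <= m)%N
     & (r.2 <= 2 * size k - 1)%N].
Proof.
elim: k F x => [|i k IH] F x inv xF fx /=.
  split=> //; apply: few_fractional_of_settled xF fx _ => j.
  by case: inv => _ _; apply.
case: ifP => [|/negbT]; first by split.
rewrite -ltnNge => m_lt.
have [_ /(_ i (mem_head _ _)) Fi _] := inv.
have recurse b y : in_face (fix_coord F i b) y -> f y = v ->
    let r := run (round_loop m k (fix_coord F i b) y v) A f in
    [/\ in_face F r.1, f r.1 = v, (num_fractional r.1 <= m)%N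
      & (r.2 <= 2 * size k - 1)%N].
  move=> yF fy; have [r1 r2 r3 r4] := IH _ y (loop_inv_fix b inv) yF fy.
  by split=> //; case/(in_face_fix _ _ Fi): r1.
have A_in b : in_face (fix_coord F i b) (A (fix_coord F i b)).
  by case: (A_min (fix_coord F i b)).
rewrite /try_fix /=.
case: (eqVneq (f (A (fix_coord F i false))) v) => [fix0|fix0] /=.
  by have [r1 r2 r3 r4] := recurse false _ (A_in false) fix0; split=> //; lia.
have k_gt0 : (0 < size k)%N.
  case: k {IH recurse} inv => [|? ?] // inv; case/eqP: fix0.
  apply: fix_zero_attains xF fx Fi _ m_lt => j ji.
  by case: inv => _ _; apply; rewrite inE.
case: (eqVneq (f (A (fix_coord F i true))) v) => [fix1|fix1] /=.
  by have [r1 r2 r3 r4] := recurse true _ (A_in true) fix1; split=> //; lia.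
have inv' := loop_inv_keep inv (settled_of_no_fix Fi fix0 fix1).
by have [r1 r2 r3 r4] := IH F x inv' xF fx; split=> //; lia.
Qed.

End Correctness.

End Analysis.

Theorem mainTheorem5 (R : realType) (m n : nat) :
  exists P : prog R n,
    forall (W : 'M[int]_(m, n)) (g : 'cV[R]_m -> R),
      convex_function setT (g : convex_lmodType 'cV[R]_m -> R^o) ->
      (forall y : 'cV[R]_m, differentiable g y) ->
      forall A : face n -> 'cV[R]_n,
        face_minimizer_oracle (compose_lin W g) A ->
        let res := run P A (compose_lin W g) in
        [/\ in_face (cube_face n) res.1,
            (forall y, in_face (cube_face n) y ->
               compose_lin W g res.1 <= compose_lin W g y),
            (num_fractional res.1 <= m)%N
          & (res.2 <= 2 * n)%N].
Proof.
(* Convexity and differentiability of g are only needed to implement the oracle A. *)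
exists (round_program R m n) => W g _ _ A A_min /=.
rewrite /round_program; case: eqP => [n0|/eqP n_neq0].
  subst n; split=> //; first by case.
    by move=> y _; rewrite [y]flatmx0.
  by rewrite (leq_trans (max_card _)) ?card_ord.
have [xC x_min] := A_min (cube_face n).
have inv : loop_inv W g (compose_lin W g (A (cube_face n))) (enum 'I_n) (cube_face n).
  by split=> [|j _|j]; rewrite ?enum_uniq ?ffunE ?mem_enum.
have [r1 r2 r3 r4] := round_loop_spec A_min x_min inv xC erefl.
split=> //; first by move=> y yC; rewrite r2; exact: x_min.
rewrite size_enum_ord in r4; rewrite /=; lia.
Qed.
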